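(* Let $R$ be a commutative ring with nonzero identity, $M$ an $R$-module, $\delta$ an expansion of ideals of $R$, $I$ a proper ideal of $R$ and $N$ a submodule of $M$ with $IM\subseteq N$. Define $\delta_{(+)}$ on ideals of the idealization $R(+)M$ by $\delta_{(+)}(J(+)L)=\delta(J)(+)M$. Then $I$ is a $\delta$-$n$-ideal of $R$ if and only if $I(+)N$ is a $\delta_{(+)}$-$n$-ideal of $R(+)M$.
   Context: An expansion of ideals of a ring $R$ is a map $\delta$ from the set of ideals of $R$ to itself such that $I\subseteq\delta(I)$ for every ideal $I$, and $\delta(I)\subseteq\delta(J)$ whenever $I\subseteq J$. $\sqrt{0}$ denotes the nilradical of the ring in question. Given an expansion $\delta$ of ideals of a ring $R$, a proper ideal $I$ of $R$ is a $\delta$-$n$-ideal if whenever $a,b\in R$ with $ab\in I$ and $a\notin\sqrt{0}$, then $b\in\delta(I)$. The idealization $R(+)M=R\times M$ has componentwise addition and multiplication $(r_1,m_1)(r_2,m_2)=(r_1r_2,r_1m_2+r_2m_1)$; for an ideal $J$ of $R$ and submodule $L$ of $M$, $J(+)L=J\times L$ is an ideal of $R(+)M$ iff $JM\subseteq L$, and $\sqrt{0_{R(+)M}}=\sqrt{0_R}(+)M$. *)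

From HB Require Import structures.
From mathcomp Require Import all_boot all_order all_algebra.
Set Implicit Arguments. Unset Strict Implicit. Unset Printing Implicit Defensive.
Import Order.TTheory GRing.Theory Num.Theory.
Local Open Scope ring_scope.

Section RingNotions.
Variable T : comNzRingType.

Definition is_ideal (I : T -> Prop) : Prop :=
  [/\ I 0, (forall x y, I x -> I y -> I (x + y)) & (forall r x, I x -> I (r * x))].

Definition is_proper_ideal (I : T -> Prop) : Prop := is_ideal I /\ ~ I 1.

Definition nilradical (x : T) : Prop := exists n : nat, x ^+ n = 0.

Definition expansion (delta : (T -> Prop) -> (T -> Prop)) : Prop :=
  [/\ (forall I, is_ideal I -> is_ideal (delta I)),
      (forall I, is_ideal I -> forall x, I x -> delta I x) &
      (forall I J, is_ideal I -> is_ideal J ->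
         (forall x, I x -> J x) -> forall x, delta I x -> delta J x)].

Definition delta_n_ideal (delta : (T -> Prop) -> (T -> Prop)) (I : T -> Prop) : Prop :=
  is_proper_ideal I /\
  forall a b : T, I (a * b) -> ~ nilradical a -> delta I b.

End RingNotions.

Section Modules.
Variables (R : comNzRingType) (M : lmodType R).

Definition is_submodule (N : M -> Prop) : Prop :=
  [/\ N 0, (forall x y, N x -> N y -> N (x + y)) & (forall r x, N x -> N (r *: x))].

(** I M ⊆ N : every element r *: m with r ∈ I lies in N (hence also all sums). *)
Definition ideal_times_module_sub (I : R -> Prop) (N : M -> Prop) : Prop :=
  forall r m, I r -> N (r *: m).

End Modules.

Definition idealization (R : comNzRingType) (M : lmodType R) : Type := (R * M)%type.

Section Idealization.
Variables (R : comNzRingType) (M : lmodType R).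

HB.instance Definition _ := GRing.Zmodule.on (idealization M).

Definition idz_one : idealization M := (1, 0).
Definition idz_mul (x y : idealization M) : idealization M :=
  (x.1 * y.1, x.1 *: y.2 + y.1 *: x.2).

Lemma idz_mulA : associative idz_mul.
Proof.
move=> [a u] [b v] [c w]; rewrite /idz_mul /=; congr pair; first by rewrite mulrA.
by rewrite !scalerDr !scalerA addrA (mulrC c a) (mulrC c b) addrAC.
Qed.

Lemma idz_mulC : commutative idz_mul.
Proof. by move=> [a u] [b v]; rewrite /idz_mul /= mulrC addrC. Qed.

Lemma idz_mul1 : left_id idz_one idz_mul.
Proof. by move=> [a u]; rewrite /idz_mul /= mul1r scale1r scaler0 addr0. Qed.

Lemma idz_mulDl : left_distributive idz_mul +%R.
Proof.
move=> [a u] [b v] [c w]; rewrite /idz_mul /=; congr pair; first by rewrite mulrDl.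
by rewrite scalerDl scalerDr addrACA.
Qed.

Lemma idz_one_neq0 : idz_one != 0.
Proof. by apply/negP => /eqP [] /eqP; rewrite oner_eq0. Qed.

HB.instance Definition _ := GRing.Zmodule_isComNzRing.Build (idealization M)
  idz_mulA idz_mulC idz_mul1 idz_mulDl idz_one_neq0.

Lemma idz_mulE (x y : idealization M) :
  x * y = (x.1 * y.1, x.1 *: y.2 + y.1 *: x.2) :> idealization M.
Proof. by []. Qed.

Definition idz_set (J : R -> Prop) (L : M -> Prop) : idealization M -> Prop :=
  fun x => J x.1 /\ L x.2.

(** delta_(+)(J(+)L) = delta(J)(+)M.  Extended to arbitrary subsets K of R(+)M
    by using the projection of K onto R in place of J (for K = J(+)L with L
    nonempty, this projection is exactly J). *)
Definition delta_plus (delta : (R -> Prop) -> (R -> Prop))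
  (K : idealization M -> Prop) : idealization M -> Prop :=
  idz_set (delta (fun r => exists m, K (r, m))) (fun _ => True).

End Idealization.

From HB Require Import structures.
From mathcomp Require Import all_boot all_order all_algebra.
Set Implicit Arguments.
Unset Strict Implicit.
Unset Printing Implicit Defensive.
Import GRing.Theory.
Local Open Scope ring_scope.

(* The first coordinate R(+)M -> R is a ring morphism whose kernel 0(+)M squares
   to zero, so (a, u) is nilpotent iff a is, and the delta_(+)-condition on
   I(+)N only sees first coordinates.  Conversely, a delta-n-ideal test for I is
   the same test for I(+)N on elements of the form (a, 0). *)

Lemma is_ideal_ext (T : comNzRingType) (I J : T -> Prop) :
  (forall x, I x <-> J x) -> is_ideal I -> is_ideal J.
Proof.
move=> IJ [I0 ID IM]; split=> [|x y /IJ Ix /IJ Iy|r x /IJ Ix]; apply/IJ => //.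
  exact: ID.
exact: IM.
Qed.

Lemma expansion_ext (T : comNzRingType) (delta : (T -> Prop) -> (T -> Prop))
    (I J : T -> Prop) :
  expansion delta -> is_ideal I -> (forall x, I x <-> J x) ->
  forall x, delta I x <-> delta J x.
Proof.
move=> [_ _ dmono] II IJ x; have IJ' := is_ideal_ext IJ II.
by split; apply: dmono => // y /IJ.
Qed.

Section IdealizationFacts.
Variables (R : comNzRingType) (M : lmodType R).
Implicit Types (x : idealization M) (I : R -> Prop) (N : M -> Prop).

Lemma idz_expr_fst x n : (x ^+ n).1 = x.1 ^+ n.
Proof. by elim: n => [|n IHn]; rewrite ?expr0 // !exprS idz_mulE /= IHn. Qed.

Lemma idz_sqr_fst0 (u : M) : ((0, u) : idealization M) ^+ 2 = 0.
Proof. by rewrite expr2 idz_mulE /= mul0r !scale0r addr0. Qed.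

Lemma nilradical_idz x : nilradical x <-> nilradical x.1.
Proof.
split=> [[n xn0]|[n x1n0]]; first by exists n; rewrite -idz_expr_fst xn0.
exists (n * 2)%N; rewrite exprM.
have : (x ^+ n).1 = 0 by rewrite idz_expr_fst.
by case: (x ^+ n) => _ u /= ->; apply: idz_sqr_fst0.
Qed.

Lemma idz_set_ideal I N :
  is_ideal I -> is_submodule N -> ideal_times_module_sub I N ->
  is_ideal (idz_set I N).
Proof.
move=> [I0 ID IM] [N0 ND NM] IN; split=> [//|[a u] [b v]|[r w] [a u]] /=.
  by move=> [Ia Nu] [Ib Nv]; split; [apply: ID | apply: ND].
move=> [Ia Nu]; rewrite idz_mulE /=; split; first exact: IM.
by apply: ND; [apply: NM | apply: IN].
Qed.

Lemma idz_set_proper_ideal I N :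
  is_proper_ideal I -> is_submodule N -> ideal_times_module_sub I N ->
  is_proper_ideal (idz_set I N).
Proof.
by move=> [II I1] NN IN; split; [apply: idz_set_ideal | case].
Qed.

Lemma idz_set_fstE I N r : N 0 -> (exists u, idz_set I N (r, u)) <-> I r.
Proof. by move=> N0; split=> [[u []] | Ir] //; exists 0. Qed.

Lemma delta_plus_idz_set (delta : (R -> Prop) -> (R -> Prop)) I N x :
  expansion delta -> is_ideal I -> N 0 ->
  delta_plus delta (idz_set I N) x <-> delta I x.1.
Proof.
move=> dexp II N0; have IP r := iff_sym (idz_set_fstE I r N0).
have [dIP dPI] := expansion_ext dexp II IP x.1.
by rewrite /delta_plus /idz_set; split=> [[/dPI]|/dIP].
Qed.

End IdealizationFacts.

Theorem proposition2p26 (R : comNzRingType) (M : lmodType R)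
  (delta : (R -> Prop) -> (R -> Prop)) (I : R -> Prop) (N : M -> Prop) :
  expansion delta -> is_proper_ideal I -> is_submodule N ->
  ideal_times_module_sub I N ->
  (delta_n_ideal delta I <->
   @delta_n_ideal (idealization M) (@delta_plus R M delta) (@idz_set R M I N)).
Proof.
move=> dexp Iprop Nsub IN; have [II _] := Iprop; have [N0 _ _] := Nsub.
have IdzProp := idz_set_proper_ideal Iprop Nsub IN.
split=> [[_ Inil] | [_ IdzNil]]; split=> //.
- move=> [a u] [b v]; rewrite idz_mulE => -[/= Iab _] a_nnil.
  apply/delta_plus_idz_set => //; apply: (Inil a b Iab).
  by move=> a_nil; apply/a_nnil/nilradical_idz.
- move=> a b Iab a_nnil.
  have Iab0 : idz_set I N (((a, 0) : idealization M) * (b, 0)).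
    by rewrite idz_mulE /= !scaler0 addr0.
  have a0_nnil : ~ nilradical ((a, 0) : idealization M) by move/nilradical_idz.
  by have /delta_plus_idz_set := IdzNil _ _ Iab0 a0_nnil; apply.
Qed.
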